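(* Let $n<\omega$, let $L\in\mathbf{M}_n$ and let $P$ be its dual $pm$-space. Then $L$ is simple if and only if $P=Q\cup\zeta(Q)$ for some order component $Q$ of $P$.
   Context: $\mathbf{M}_n$ is the variety of regular pseudocomplemented de Morgan algebras of range $n$: algebras $(L;\wedge,\vee,{}^\ast,{}^\prime,0,1)$ with bounded distributive lattice reduct, pseudocomplement ${}^\ast$, de Morgan involution ${}^\prime$, satisfying $x\wedge x^{\prime\ast\prime}\le y\vee y^\ast$ and $(x\wedge x^{\prime\ast})^{n(\prime\ast)}=(x\wedge x^{\prime\ast})^{(n+1)(\prime\ast)}$, where $x^{0(\prime\ast)}=x$, $x^{(k+1)(\prime\ast)}=((x^{k(\prime\ast)})')^\ast$. Simple algebras are non-trivial. The dual $pm$-space is the Priestley space $(P;\tau,\le)$ of prime ideals with involution $\zeta(I)=\{a:a'\notin I\}$. An order component of $P$ is a maximal subset any two elements of which are joined by a finite path in the comparability graph of $(P;\le)$. *)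

From Stdlib Require Import Relations.

Set Implicit Arguments.
Arguments clos_refl_trans {A}.

Record pmAlgebra := PmAlgebra {
  car :> Type;
  meet : car -> car -> car;
  join : car -> car -> car;
  pc   : car -> car;
  neg  : car -> car;
  bot  : car;
  top  : car;
  meetA : forall a b c, meet a (meet b c) = meet (meet a b) c;
  joinA : forall a b c, join a (join b c) = join (join a b) c;
  meetC : forall a b, meet a b = meet b a;
  joinC : forall a b, join a b = join b a;
  meet_join_absorb : forall a b, meet a (join a b) = a;
  join_meet_absorb : forall a b, join a (meet a b) = a;
  meet_joinDr : forall a b c, meet a (join b c) = join (meet a b) (meet a c);
  join_bot : forall a, join a bot = a;
  meet_top : forall a, meet a top = a;
  pcP : forall a b, meet b (pc a) = b <-> meet a b = bot;
  negK : forall a, neg (neg a) = a;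
  neg_meet : forall a b, neg (meet a b) = join (neg a) (neg b);
  neg_join : forall a b, neg (join a b) = meet (neg a) (neg b)
}.

Arguments meet {_}. Arguments join {_}. Arguments pc {_}. Arguments neg {_}.
Arguments bot {_}. Arguments top {_}.

Section Defs.
Variable L : pmAlgebra.

Definition le (a b : L) : Prop := meet a b = a.

Definition negpc (x : L) : L := pc (neg x).
Fixpoint iter_negpc (k : nat) (x : L) : L :=
  match k with O => x | S k' => negpc (iter_negpc k' x) end.

Definition in_Mn (n : nat) : Prop :=
  (forall x y : L, le (meet x (neg (pc (neg x)))) (join y (pc y))) /\
  (forall x : L, iter_negpc n (meet x (negpc x)) =
                 iter_negpc (S n) (meet x (negpc x))).

Definition congruence (th : L -> L -> Prop) : Prop :=
  equivalence L th /\
  (forall a b c d, th a b -> th c d -> th (meet a c) (meet b d)) /\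
  (forall a b c d, th a b -> th c d -> th (join a c) (join b d)) /\
  (forall a b, th a b -> th (pc a) (pc b)) /\
  (forall a b, th a b -> th (neg a) (neg b)).

Definition simple : Prop :=
  (bot : L) <> top /\
  forall th, congruence th ->
    (forall a b, th a b -> a = b) \/ (forall a b : L, th a b).

(** Prime ideals (points of the dual pm-space), as subsets of L *)
Definition prime_ideal (I : L -> Prop) : Prop :=
  I (bot : L) /\
  (forall a b, le a b -> I b -> I a) /\
  (forall a b, I a -> I b -> I (join a b)) /\
  ~ I (top : L) /\
  (forall a b, I (meet a b) -> I a \/ I b).

Definition zeta (I : L -> Prop) : L -> Prop := fun a => ~ I (neg a).

Definition comparable_pt (I J : L -> Prop) : Prop :=
  prime_ideal I /\ prime_ideal J /\
  ((forall a, I a -> J a) \/ (forall a, J a -> I a)).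

Definition path_connected (I J : L -> Prop) : Prop :=
  clos_refl_trans comparable_pt I J.

Definition order_component (Q : (L -> Prop) -> Prop) : Prop :=
  (exists I, Q I) /\
  (forall I, Q I -> prime_ideal I) /\
  (forall I J, Q I -> Q J -> path_connected I J) /\
  (forall Q' : (L -> Prop) -> Prop,
     (forall I, Q I -> Q' I) ->
     (forall I, Q' I -> prime_ideal I) ->
     (forall I J, Q' I -> Q' J -> path_connected I J) ->
     forall I, Q' I -> Q I).

End Defs.

From Stdlib Require Import Classical Relations FunctionalExtensionality PropExtensionality.
From mathcomp Require classical_sets.

(* Write f(x) = x'^*.
   (<=) If a congruence theta does not identify 0 and 1, Zorn's lemma yields a
   theta-saturated prime ideal.  In a regular algebra a prime ideal strictly
   contained in another one contains no pair y, y^*, and such a prime is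
   saturated as soon as it contains the theta-class of 0; hence saturation passes
   along comparabilities in both directions, and it is preserved by zeta.  When
   P = Q u zeta(Q) every prime ideal is therefore saturated, and since prime
   ideals separate points, theta is the identity.
   (=>) Let Q be the order component of some prime I0.  If neither a prime I nor
   zeta(I) lies in Q, descending from I through primes below zeta-images shows
   that some x in I0 has f^n(x), f^(n+1)(x) outside I.  Then e = f^n(x /\ f x)
   is a fixed point of f (range n), so a |-> a /\ e induces a congruence and
   simplicity forces e in {0, 1}; but e lies in I0 and not in I. *)

Arguments meetA {_}. Arguments joinA {_}. Arguments meetC {_}. Arguments joinC {_}.
Arguments meet_join_absorb {_}. Arguments join_meet_absorb {_}. Arguments meet_joinDr {_}.
Arguments join_bot {_}. Arguments meet_top {_}. Arguments pcP {_}. Arguments negK {_}.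
Arguments neg_meet {_}. Arguments neg_join {_}.

Section Lattice.
Variable L : pmAlgebra.
Implicit Types a b c d x y : L.

Lemma meetxx a : meet a a = a.
Proof. rewrite <- (join_meet_absorb a a) at 2. apply meet_join_absorb. Qed.

Lemma joinxx a : join a a = a.
Proof. rewrite <- (meet_join_absorb a a) at 2. apply join_meet_absorb. Qed.

Lemma meetx0 a : meet a bot = bot.
Proof.
  rewrite meetC, <- (join_bot a) at 1. rewrite joinC. apply meet_join_absorb.
Qed.

Lemma meet0x a : meet bot a = bot.
Proof. rewrite meetC; apply meetx0. Qed.

Lemma meet1x a : meet top a = a.
Proof. rewrite meetC; apply meet_top. Qed.

Lemma join0x a : join bot a = a.
Proof. rewrite joinC; apply join_bot. Qed.

Lemma meet_joinDl a b c : meet (join b c) a = join (meet b a) (meet c a).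
Proof. rewrite meetC, meet_joinDr, (meetC a b), (meetC a c). reflexivity. Qed.

Lemma neg_inj a b : neg a = neg b -> a = b.
Proof. intro H. rewrite <- (negK a), <- (negK b), H. reflexivity. Qed.

Lemma neg0 : neg (bot : L) = top.
Proof.
  assert (H : neg (neg (top : L)) = meet (neg (neg top)) (neg bot)).
  { rewrite <- neg_join, join_bot. reflexivity. }
  rewrite negK, meet1x in H. symmetry; exact H.
Qed.

Lemma neg1 : neg (top : L) = bot.
Proof. rewrite <- neg0, negK. reflexivity. Qed.

Lemma join_meetDr a b c : join a (meet b c) = meet (join a b) (join a c).
Proof.
  apply neg_inj. rewrite neg_join, !neg_meet, meet_joinDr, !neg_join. reflexivity.
Qed.

Lemma le_refl a : le L a a.
Proof. apply meetxx. Qed.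

Lemma le_trans a b c : le L a b -> le L b c -> le L a c.
Proof. unfold le; intros H1 H2. rewrite <- H1, <- meetA, H2. reflexivity. Qed.

Lemma le_antisym a b : le L a b -> le L b a -> a = b.
Proof. unfold le; intros H1 H2. rewrite <- H1, meetC. exact H2. Qed.

Lemma leIl a b : le L (meet a b) a.
Proof. unfold le. rewrite (meetC _ a), meetA, meetxx. reflexivity. Qed.

Lemma leIr a b : le L (meet a b) b.
Proof. rewrite meetC. apply leIl. Qed.

Lemma leUl a b : le L a (join a b).
Proof. apply meet_join_absorb. Qed.

Lemma leUr a b : le L b (join a b).
Proof. rewrite joinC. apply leUl. Qed.

Lemma lexI a b c : le L c a -> le L c b -> le L c (meet a b).
Proof. unfold le; intros H1 H2. rewrite meetA, H1, H2. reflexivity. Qed.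

Lemma leUx a b c : le L a c -> le L b c -> le L (join a b) c.
Proof.
  unfold le; intros H1 H2. rewrite meet_joinDl, H1, H2. reflexivity.
Qed.

Lemma le0x a : le L bot a.
Proof. apply meet0x. Qed.

Lemma lex1 a : le L a top.
Proof. apply meet_top. Qed.

Lemma lex0 a : le L a bot -> a = bot.
Proof. unfold le; intro H. rewrite meetx0 in H. symmetry; exact H. Qed.

Lemma leI2 a b c d : le L a b -> le L c d -> le L (meet a c) (meet b d).
Proof.
  intros H1 H2. apply lexI.
  - eapply le_trans; [apply leIl | exact H1].
  - eapply le_trans; [apply leIr | exact H2].
Qed.

Lemma leU2 a b c d : le L a b -> le L c d -> le L (join a c) (join b d).
Proof.
  intros H1 H2. apply leUx.
  - eapply le_trans; [exact H1 | apply leUl].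
  - eapply le_trans; [exact H2 | apply leUr].
Qed.

Lemma neg_le a b : le L a b -> le L (neg b) (neg a).
Proof.
  unfold le; intro H. rewrite <- H, neg_meet, joinC. apply meet_join_absorb.
Qed.

Lemma meet_pc a : meet a (pc a) = bot.
Proof. apply (proj1 (pcP a (pc a))). apply meetxx. Qed.

Lemma pc_max a b : meet a b = bot -> le L b (pc a).
Proof. apply pcP. Qed.

Lemma pc_le a b : le L a b -> le L (pc b) (pc a).
Proof.
  intro H. apply pc_max, lex0. rewrite <- (meet_pc b). apply leI2; [exact H | apply le_refl].
Qed.

Lemma pc0 : pc (bot : L) = top.
Proof. apply le_antisym; [apply lex1 | apply pc_max, meet0x]. Qed.

Lemma pc_join a b : pc (join a b) = meet (pc a) (pc b).
Proof.
  apply le_antisym.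
  - apply lexI; apply pc_le; [apply leUl | apply leUr].
  - apply pc_max. rewrite meet_joinDl, meetA, meet_pc, meet0x, join0x.
    rewrite (meetC (pc a)), meetA, meet_pc. apply meet0x.
Qed.

Lemma negpc_le a b : le L a b -> le L (negpc L a) (negpc L b).
Proof. intro H. apply pc_le, neg_le, H. Qed.

Lemma negpcI a b : negpc L (meet a b) = meet (negpc L a) (negpc L b).
Proof. unfold negpc. rewrite neg_meet, pc_join. reflexivity. Qed.

Lemma iter_negpcSr k x : iter_negpc L (S k) x = iter_negpc L k (negpc L x).
Proof. induction k as [|k IH]; simpl in *; [reflexivity | rewrite IH; reflexivity]. Qed.

Lemma iter_negpc_le k a b : le L a b -> le L (iter_negpc L k a) (iter_negpc L k b).
Proof. induction k; simpl; intro H; [exact H | apply negpc_le, IHk, H]. Qed.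

Lemma iter_negpcI k a b :
  iter_negpc L k (meet a b) = meet (iter_negpc L k a) (iter_negpc L k b).
Proof. induction k as [|k IH]; simpl; [reflexivity | rewrite IH; apply negpcI]. Qed.

Definition down_closed (J : L -> Prop) := forall a b, le L a b -> J b -> J a.
Definition join_closed (J : L -> Prop) := forall a b, J a -> J b -> J (join a b).
Definition meet_closed (F : L -> Prop) := forall a b, F a -> F b -> F (meet a b).
Definition ideal (J : L -> Prop) := J bot /\ down_closed J /\ join_closed J.

Lemma join_closed_sub_or (J A B : L -> Prop) :
  join_closed J -> down_closed A -> down_closed B -> (forall x, J x -> A x \/ B x) ->
  (forall x, J x -> A x) \/ (forall x, J x -> B x).
Proof.
  intros HJ HA HB HAB. apply NNPP. intro Hn. apply not_or_and in Hn as [NA NB].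
  apply not_all_ex_not in NA as [x1 NA]. apply imply_to_and in NA as [J1 A1].
  apply not_all_ex_not in NB as [x2 NB]. apply imply_to_and in NB as [J2 B2].
  destruct (HAB (join x1 x2) (HJ _ _ J1 J2)) as [H|H].
  - exact (A1 (HA _ _ (leUl x1 x2) H)).
  - exact (B2 (HB _ _ (leUr x1 x2) H)).
Qed.

Definition regular := forall x y : L, le L (meet x (neg (pc (neg x)))) (join y (pc y)).

Definition range_identity (n : nat) := forall x : L,
  iter_negpc L n (meet x (negpc L x)) = iter_negpc L (S n) (meet x (negpc L x)).

End Lattice.

Section SaturatedPrimeIdeal.
Variables (L : pmAlgebra) (th : L -> L -> Prop).
Implicit Types a b c d x y z : L.
Implicit Types J M : L -> Prop.
Hypothesis th_refl : forall a, th a a.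
Hypothesis th_sym : forall a b, th a b -> th b a.
Hypothesis th_trans : forall a b c, th a b -> th b c -> th a c.
Hypothesis th_meet : forall a b c d, th a b -> th c d -> th (meet a c) (meet b d).
Hypothesis th_join : forall a b c d, th a b -> th c d -> th (join a c) (join b d).

Definition saturated J := forall a b, th a b -> J a -> J b.

Variable F : L -> Prop.
Hypothesis F_top : F top.
Hypothesis F_meet : meet_closed L F.

Definition avoiding J :=
  down_closed L J /\ join_closed L J /\ saturated J /\ (forall x, J x -> ~ F x).

Lemma avoiding_ext J J' : (forall a, J a <-> J' a) -> avoiding J -> avoiding J'.
Proof.
  intros E [Hd [Hj [Hs Hf]]]. split; [|split; [|split]].
  - intros a b Hab Hb. apply E. apply (Hd a b Hab), E, Hb.
  - intros a b Ha Hb. apply E. apply Hj; apply E; assumption.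
  - intros a b Hab Ha. apply E. apply (Hs a b Hab), E, Ha.
  - intros x Hx. apply Hf, E, Hx.
Qed.

(* For a saturated ideal M, the saturated ideal generated by M and x. *)
Definition sat_ideal_join M x z := exists m, M m /\ th z (meet z (join m x)).

Section Generated.
Variables (M : L -> Prop) (x : L).
Hypothesis M_join : join_closed L M.

Lemma sat_ideal_join_sub z : M z -> sat_ideal_join M x z.
Proof. intro Mz. exists z. split; [exact Mz|]. rewrite meet_join_absorb. apply th_refl. Qed.

Lemma sat_ideal_join_x m : M m -> sat_ideal_join M x x.
Proof.
  intro Mm. exists m. split; [exact Mm|]. rewrite joinC, meet_join_absorb. apply th_refl.
Qed.

Lemma sat_ideal_join_avoiding :
  (forall z, sat_ideal_join M x z -> ~ F z) -> avoiding (sat_ideal_join M x).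
Proof.
  intro HF. split; [|split; [|split]]; [| | | exact HF].
  - intros a b Hab [m [Mm Hm]]. exists m. split; [exact Mm|].
    unfold le in Hab. rewrite <- Hab, <- meetA. apply th_meet; [apply th_refl | exact Hm].
  - intros a b [m1 [Mm1 H1]] [m2 [Mm2 H2]].
    exists (join m1 m2). split; [apply M_join; assumption|].
    set (w := join (meet a (join m1 x)) (meet b (join m2 x))).
    assert (Hw : th (join a b) w) by (apply th_join; assumption).
    assert (Hle : le L w (join (join m1 m2) x)).
    { apply leUx; (eapply le_trans; [apply leIr | apply leU2; [|apply le_refl]]);
        [apply leUl | apply leUr]. }
    eapply th_trans; [exact Hw|]. unfold le in Hle. rewrite <- Hle.
    apply th_meet; [apply th_sym, Hw | apply th_refl].
  - intros a b Hab [m [Mm Hm]]. exists m. split; [exact Mm|].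
    eapply th_trans; [apply th_sym, Hab|]. eapply th_trans; [exact Hm|].
    apply th_meet; [exact Hab | apply th_refl].
Qed.

End Generated.

Lemma maximal_avoiding_prime M : M bot -> avoiding M ->
  (forall J, avoiding J -> (forall a, M a -> J a) -> forall a, J a -> M a) ->
  prime_ideal L M.
Proof.
  intros M_bot HM Hmax. pose proof HM as [M_down [M_join [M_sat M_F]]].
  assert (Hgen : forall x, ~ M x -> exists z, F z /\ sat_ideal_join M x z).
  { intros x Mx. apply NNPP. intro Hno. apply Mx.
    apply (Hmax (sat_ideal_join M x)).
    - apply sat_ideal_join_avoiding; [exact M_join|]. intros z Gz Fz. apply Hno. now exists z.
    - apply sat_ideal_join_sub.
    - apply (sat_ideal_join_x M x bot M_bot). }
  split; [exact M_bot | split; [exact M_down | split; [exact M_join | split]]].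
  - intro Mt. exact (M_F _ Mt F_top).
  - intros a b Mab. apply NNPP. intro Hn. apply not_or_and in Hn as [Ma Mb].
    destruct (Hgen a Ma) as [z1 [Fz1 [m1 [Mm1 H1]]]].
    destruct (Hgen b Mb) as [z2 [Fz2 [m2 [Mm2 H2]]]].
    set (v := meet (meet z1 (join m1 a)) (meet z2 (join m2 b))).
    assert (Hv : th (meet z1 z2) v) by (apply th_meet; assumption).
    assert (Hle : le L v (join (join m1 m2) (meet a b))).
    { rewrite join_meetDr. apply leI2; (eapply le_trans; [apply leIr | apply leU2; [|apply le_refl]]);
        [apply leUl | apply leUr]. }
    assert (Mv : M v).
    { eapply M_down; [exact Hle|]. apply M_join; [apply M_join|]; assumption. }
    apply (M_F (meet z1 z2)); [exact (M_sat _ _ (th_sym _ _ Hv) Mv) | apply F_meet; assumption].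
Qed.

Variable I0 : L -> Prop.
Hypothesis I0_avoiding : avoiding I0.

Lemma avoiding_chain_union (C : (L -> Prop) -> Prop) :
  (forall X, C X -> avoiding (fun a => X a \/ I0 a)) ->
  classical_sets.total_on C classical_sets.subset ->
  avoiding (fun a => classical_sets.bigcup C (fun X => X) a \/ I0 a).
Proof.
  intros HC Htot.
  set (U := fun a => classical_sets.bigcup C (fun X => X) a \/ I0 a).
  assert (Hloc : forall a b, U a -> U b ->
            exists G, avoiding G /\ (forall c, G c -> U c) /\ G a /\ G b).
  { assert (Hsub : forall X, C X -> forall c, X c \/ I0 c -> U c).
    { intros X HX c [Xc|Ic]; [left; exists X; assumption | right; exact Ic]. }
    intros a b [[X HX Xa]|Ia] [[Y HY Yb]|Ib].
    - destruct (Htot X Y HX HY) as [XY|YX].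
      + exists (fun c => Y c \/ I0 c). split; [apply HC, HY|]. split; [apply Hsub, HY|].
        split; left; [apply XY|]; assumption.
      + exists (fun c => X c \/ I0 c). split; [apply HC, HX|]. split; [apply Hsub, HX|].
        split; left; [|apply YX]; assumption.
    - exists (fun c => X c \/ I0 c). split; [apply HC, HX|]. split; [apply Hsub, HX|].
      split; [left | right]; assumption.
    - exists (fun c => Y c \/ I0 c). split; [apply HC, HY|]. split; [apply Hsub, HY|].
      split; [right | left]; assumption.
    - exists I0. split; [exact I0_avoiding|]. split; [intros c Ic; right; exact Ic|].
      split; assumption. }
  split; [|split; [|split]].
  - intros a b Hab Ub. destruct (Hloc b b Ub Ub) as [G [[Gd _] [GU [Gb _]]]].
    apply GU, (Gd a b Hab Gb).
  - intros a b Ua Ub. destruct (Hloc a b Ua Ub) as [G [[_ [Gj _]] [GU [Ga Gb]]]].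
    apply GU, Gj; assumption.
  - intros a b Hab Ua. destruct (Hloc a a Ua Ua) as [G [[_ [_ [Gs _]]] [GU [Ga _]]]].
    apply GU, (Gs a b Hab Ga).
  - intros a Ua. destruct (Hloc a a Ua Ua) as [G [[_ [_ [_ GF]]] [_ [Ga _]]]].
    apply GF, Ga.
Qed.

Lemma exists_maximal_avoiding : exists M, avoiding M /\ (forall a, I0 a -> M a) /\
  (forall J, avoiding J -> (forall a, M a -> J a) -> forall a, J a -> M a).
Proof.
  (* Zorn on the sets X with X \/ I0 avoiding, so that the empty chain is harmless. *)
  destruct (@classical_sets.Zorn_bigcup L (fun X => avoiding (fun a => X a \/ I0 a)))
    as [A [HA Hmax]].
  { intros C HC Htot. apply avoiding_chain_union; assumption. }
  exists (fun a => A a \/ I0 a). split; [exact HA|]. split; [intros a Ia; right; exact Ia|].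
  intros J HJ HAJ a Ja. left. apply NNPP. intro Aa. apply (Hmax J).
  - split; [intros c Ac; apply HAJ; left; exact Ac|]. intro JA. apply Aa, JA, Ja.
  - apply (avoiding_ext J); [|exact HJ].
    intro c. split; [intro Jc; left; exact Jc|]. intros [Jc|Ic]; [exact Jc|].
    apply HAJ; right; exact Ic.
Qed.

Theorem exists_saturated_prime_ideal : I0 bot ->
  exists K, prime_ideal L K /\ (forall a, I0 a -> K a) /\ (forall a, F a -> ~ K a) /\
    saturated K.
Proof.
  intro I0_bot. destruct exists_maximal_avoiding as [M [HM [HI0 Hmax]]].
  exists M. split; [apply maximal_avoiding_prime; auto|].
  destruct HM as [_ [_ [Hs HF]]]. split; [exact HI0|]. split; [|exact Hs].
  intros a Fa Ma. exact (HF a Ma Fa).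
Qed.

End SaturatedPrimeIdeal.

Section PrimeIdeals.
Variable L : pmAlgebra.
Implicit Types a b c d x y z : L.
Implicit Types I J K : L -> Prop.

Lemma prime_down {I a b} : prime_ideal L I -> le L a b -> I b -> I a.
Proof. intros [_ [H _]]. apply H. Qed.

Lemma prime_join {I a b} : prime_ideal L I -> I a -> I b -> I (join a b).
Proof. intros [_ [_ [H _]]]. apply H. Qed.

Lemma prime_bot {I} : prime_ideal L I -> I bot.
Proof. intros [H _]. exact H. Qed.

Lemma prime_top {I} : prime_ideal L I -> ~ I top.
Proof. intros [_ [_ [_ [H _]]]]. exact H. Qed.

Lemma prime_meet {I a b} : prime_ideal L I -> I (meet a b) -> I a \/ I b.
Proof. intros [_ [_ [_ [_ H]]]]. apply H. Qed.

Lemma prime_meetN {I a b} : prime_ideal L I -> ~ I a -> ~ I b -> ~ I (meet a b).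
Proof. intros HI Ha Hb Hab. destruct (prime_meet HI Hab); contradiction. Qed.

Lemma prime_pc {I} a : prime_ideal L I -> I a \/ I (pc a).
Proof. intro HI. apply (prime_meet HI). rewrite meet_pc. apply (prime_bot HI). Qed.

Lemma prime_ideal_ideal I : prime_ideal L I -> ideal L I.
Proof. intros [Hb [Hd [Hj _]]]. split; [|split]; assumption. Qed.

Lemma zeta_prime {I} : prime_ideal L I -> prime_ideal L (zeta L I).
Proof.
  intro HI. unfold zeta. split; [|split; [|split; [|split]]].
  - rewrite neg0. apply (prime_top HI).
  - intros a b Hab Hb Ha. apply Hb. exact (prime_down HI (neg_le _ _ _ Hab) Ha).
  - intros a b Ha Hb. rewrite neg_join. apply (prime_meetN HI); assumption.
  - rewrite neg1. intro H. apply H, (prime_bot HI).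
  - intros a b Hab. rewrite neg_meet in Hab.
    apply NNPP. intro Hn. apply not_or_and in Hn as [Ha Hb].
    apply Hab. apply (prime_join HI); apply NNPP; assumption.
Qed.

Lemma zetaK I : zeta L (zeta L I) = I.
Proof.
  apply functional_extensionality. intro a. apply propositional_extensionality.
  unfold zeta. rewrite negK. split; [apply NNPP | tauto].
Qed.

Lemma zeta_sub I J : (forall a, J a -> I a) -> forall a, zeta L I a -> zeta L J a.
Proof. unfold zeta. intros H a Ha HJ. apply Ha, H, HJ. Qed.

Lemma zeta_negpc K z : prime_ideal L K -> K z -> zeta L K (negpc L z).
Proof.
  intros HK Kz. destruct (prime_pc (neg z) (zeta_prime HK)) as [H|H]; [|exact H].
  exfalso. apply H. rewrite negK. exact Kz.
Qed.

Lemma prime_negpc2 K z : prime_ideal L K -> K z -> K (negpc L (negpc L z)).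
Proof.
  intros HK Kz. rewrite <- (zetaK K).
  apply zeta_negpc; [apply zeta_prime, HK | apply zeta_negpc; assumption].
Qed.

Lemma prime_iter_negpc K z n : prime_ideal L K -> K z -> K (negpc L z) ->
  K (iter_negpc L n z).
Proof.
  intro HK. revert z. induction n as [|n IH]; intros z H1 H2; [exact H1|].
  rewrite iter_negpcSr. apply IH; [exact H2 | apply prime_negpc2; assumption].
Qed.

Lemma exists_prime_ideal_sep (I0 F : L -> Prop) : ideal L I0 -> F top -> meet_closed L F ->
  (forall x, I0 x -> ~ F x) ->
  exists K, prime_ideal L K /\ (forall a, I0 a -> K a) /\ (forall a, F a -> ~ K a).
Proof.
  intros [Hb [Hd Hj]] Ht Hm Hdisj.
  destruct (@exists_saturated_prime_ideal L eq (fun a => eq_refl) (@eq_sym L)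
     (@eq_trans L) (fun a b c d H H' => f_equal2 meet H H')
     (fun a b c d H H' => f_equal2 join H H') F Ht Hm I0) as [K [HK [HI [HF _]]]].
  - split; [exact Hd | split; [exact Hj | split; [intros a b <-; auto | exact Hdisj]]].
  - exact Hb.
  - exists K; auto.
Qed.

Lemma exists_prime_ideal_avoiding (F : L -> Prop) : F top -> meet_closed L F -> ~ F bot ->
  exists K, prime_ideal L K /\ (forall a, F a -> ~ K a).
Proof.
  intros Ht Hm Hb.
  destruct (exists_prime_ideal_sep (fun z => z = bot) F) as [K [HK [_ HF]]]; auto.
  - split; [reflexivity | split].
    + intros a b Hab ->. apply lex0, Hab.
    + intros a b -> ->. apply joinxx.
  - intros x -> Fx. exact (Hb Fx).
  - exists K; auto.
Qed.

Lemma exists_prime_ideal_separating a b : ~ le L b a ->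
  exists K, prime_ideal L K /\ K a /\ ~ K b.
Proof.
  intro Hba.
  destruct (exists_prime_ideal_sep (fun x => le L x a) (fun x => le L b x))
    as [K [HK [Ha Hb]]].
  - split; [apply le0x | split].
    + intros u v Huv Hv. eapply le_trans; eassumption.
    + intros u v Hu Hv. apply leUx; assumption.
  - apply lex1.
  - intros u v Hu Hv. apply lexI; assumption.
  - intros x Hxa Hbx. apply Hba. eapply le_trans; eassumption.
  - exists K. split; [exact HK|]. split; [apply Ha, le_refl | apply Hb, le_refl].
Qed.

End PrimeIdeals.

Section Components.
Variable L : pmAlgebra.
Implicit Types I J K : L -> Prop.

Lemma comparable_sym I J : comparable_pt L I J -> comparable_pt L J I.
Proof. intros [HI [HJ H]]. split; [exact HJ | split; [exact HI | tauto]]. Qed.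

Lemma comparable_zeta I J : comparable_pt L I J -> comparable_pt L (zeta L I) (zeta L J).
Proof.
  intros [HI [HJ H]]. split; [apply zeta_prime, HI | split; [apply zeta_prime, HJ |]].
  destruct H as [H|H]; [right | left]; apply zeta_sub, H.
Qed.

Lemma path_sym I J : path_connected L I J -> path_connected L J I.
Proof.
  induction 1; [apply rt_step, comparable_sym | apply rt_refl | eapply rt_trans]; eassumption.
Qed.

Lemma path_zeta I J : path_connected L I J -> path_connected L (zeta L I) (zeta L J).
Proof.
  induction 1; [apply rt_step, comparable_zeta | apply rt_refl | eapply rt_trans]; eassumption.
Qed.

Lemma path_prime I J : path_connected L I J -> prime_ideal L I -> prime_ideal L J.
Proof. induction 1 as [I J [_ [HJ _]] | |]; auto. Qed.

Lemma order_component_path I0 : prime_ideal L I0 -> order_component L (path_connected L I0).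
Proof.
  intro HI0. split; [exists I0; apply rt_refl|].
  split; [intros I HI; exact (path_prime I0 I HI HI0)|].
  split; [intros I J HI HJ; eapply rt_trans; [apply path_sym, HI | exact HJ]|].
  intros Q' HQ' _ HQ'c I HI. apply HQ'c; [apply HQ', rt_refl | exact HI].
Qed.

Definition linked I K := path_connected L I K \/ path_connected L I (zeta L K).

Lemma linked_zeta I K : linked I K -> linked I (zeta L K).
Proof. unfold linked. rewrite zetaK. tauto. Qed.

Lemma linked_comparable I K K' : comparable_pt L K K' -> linked I K -> linked I K'.
Proof.
  intros Hc [H|H]; [left | right]; (eapply rt_trans; [exact H | apply rt_step]);
    [exact Hc | apply comparable_zeta, Hc].
Qed.

Lemma linked_sym I K : linked I K -> linked K I.
Proof.
  intros [H|H]; [left; apply path_sym, H | right].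
  apply path_sym. rewrite <- (zetaK L K). apply path_zeta, H.
Qed.

Definition zeta_union_covers (Q : (L -> Prop) -> Prop) :=
  forall I, prime_ideal L I <-> (Q I \/ exists J, Q J /\ I = zeta L J).

End Components.

Section Saturation.
Variables (L : pmAlgebra) (th : L -> L -> Prop).
Hypothesis Hth : congruence L th.
Implicit Types a b c d x y : L.
Implicit Types I J K : L -> Prop.

Definition pc_free K := forall y, K y -> ~ K (pc y).

Lemma saturated_zeta K : saturated L th K -> saturated L th (zeta L K).
Proof.
  destruct Hth as [[_ _ Hsym] [_ [_ [_ Hn]]]].
  intros HK a b Hab Ka Kb. apply Ka. exact (HK _ _ (Hn _ _ (Hsym _ _ Hab)) Kb).
Qed.

Lemma saturated_zetaE K : saturated L th (zeta L K) <-> saturated L th K.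
Proof.
  split; [|apply saturated_zeta]. intro H. rewrite <- (zetaK L K). apply saturated_zeta, H.
Qed.

Lemma saturated_kernel_sub K K' : prime_ideal L K -> saturated L th K -> prime_ideal L K' ->
  (forall a, K' a -> K a) -> forall d, th d bot -> K' d.
Proof.
  destruct Hth as [_ [_ [_ [Hp _]]]]. intros HK HsK HK' HK'K d Hd.
  destruct (prime_pc L d HK') as [H|H]; [exact H|]. exfalso.
  apply (prime_top L HK). apply (HsK (pc d)); [rewrite <- (pc0 L); apply Hp, Hd | apply HK'K, H].
Qed.

Lemma saturated_of_pc_free K : prime_ideal L K -> pc_free K ->
  (forall d, th d bot -> K d) -> saturated L th K.
Proof.
  destruct Hth as [[Hrefl _ _] [Hm [_ [Hp _]]]].
  intros HK Hfree Hker a b Hab Ka. apply NNPP. intro Kb.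
  assert (Kpb : K (pc b)) by (destruct (prime_pc L b HK); [contradiction | assumption]).
  (* a^* /\ b^** is congruent to b^* /\ b^** = 0, yet neither factor lies in K *)
  apply (prime_meetN L HK (Hfree a Ka) (Hfree _ Kpb)).
  apply Hker. rewrite <- (meet_pc L (pc b)). apply Hm; [apply Hp, Hab | apply Hrefl].
Qed.

Lemma pc_free_of_proper_sub J I x : regular L -> prime_ideal L J -> prime_ideal L I ->
  (forall a, J a -> I a) -> I x -> ~ J x -> pc_free J.
Proof.
  intros Hreg HJ HI HJI Ix Jx y Jy Jpy.
  assert (Jx' : J (meet x (neg (pc (neg x))))).
  { eapply prime_down; [exact HJ | apply (Hreg x y) | apply (prime_join L HJ); assumption]. }
  destruct (prime_meet L HJ Jx') as [H|H]; [contradiction|].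
  exact (zeta_negpc L I x HI Ix (HJI _ H)).
Qed.

Lemma saturated_sub I J : regular L -> prime_ideal L I -> prime_ideal L J ->
  (forall a, J a -> I a) -> saturated L th I -> saturated L th J.
Proof.
  intros Hreg HI HJ HJI HsI.
  destruct (classic (forall a, I a -> J a)) as [HIJ|HIJ].
  - intros a b Hab Ja. apply HIJ, (HsI a b Hab), HJI, Ja.
  - apply not_all_ex_not in HIJ as [x Hx]. apply imply_to_and in Hx as [Ix Jx].
    apply saturated_of_pc_free; [exact HJ | exact (pc_free_of_proper_sub J I x Hreg HJ HI HJI Ix Jx) |].
    exact (saturated_kernel_sub I J HI HsI HJ HJI).
Qed.

Lemma saturated_comparable I J : regular L -> comparable_pt L I J ->
  saturated L th I -> saturated L th J.
Proof.
  intros Hreg [HI [HJ [HIJ|HJI]]] HsI.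
  - apply saturated_zetaE. apply (saturated_sub (zeta L I)); auto using zeta_prime.
    + apply zeta_sub, HIJ.
    + apply saturated_zeta, HsI.
  - exact (saturated_sub I J Hreg HI HJ HJI HsI).
Qed.

Lemma saturated_path I J : regular L -> path_connected L I J ->
  saturated L th I -> saturated L th J.
Proof. intros Hreg. induction 1; eauto using saturated_comparable. Qed.

Lemma saturated_all_primes Q K : regular L -> order_component L Q -> zeta_union_covers L Q ->
  prime_ideal L K -> saturated L th K -> forall I, prime_ideal L I -> saturated L th I.
Proof.
  intros Hreg [_ [_ [HQc _]]] Hcover HK HsK.
  assert (HsQ : forall J, Q J -> saturated L th J).
  { intros J QJ. destruct (proj1 (Hcover K) HK) as [QK | [J0 [QJ0 ->]]].
    - exact (saturated_path K J Hreg (HQc K J QK QJ) HsK).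
    - exact (saturated_path J0 J Hreg (HQc J0 J QJ0 QJ) (proj1 (saturated_zetaE J0) HsK)). }
  intros I HI. destruct (proj1 (Hcover I) HI) as [QI | [J [QJ ->]]].
  - exact (HsQ I QI).
  - exact (saturated_zeta J (HsQ J QJ)).
Qed.

Lemma exists_saturated_prime : ~ th bot top -> exists K, prime_ideal L K /\ saturated L th K.
Proof.
  destruct Hth as [[Hrefl Htrans Hsym] [Hm [Hj _]]]. intro H01.
  destruct (@exists_saturated_prime_ideal L th Hrefl Hsym Htrans Hm Hj
              (fun x => th x top) (Hrefl top)) with (I0 := fun x => th x bot)
    as [K [HK [_ [_ HsK]]]].
  - intros a b Ha Hb. rewrite <- (meetxx L top). apply Hm; assumption.
  - split; [|split; [|split]].
    + intros a b Hab Hb. unfold le in Hab. rewrite <- Hab, <- (meetx0 L a).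
      apply Hm; [apply Hrefl | exact Hb].
    + intros a b Ha Hb. rewrite <- (joinxx L bot). apply Hj; assumption.
    + intros a b Hab Ha. exact (Htrans _ _ _ (Hsym _ _ Hab) Ha).
    + intros x H0 H1. exact (H01 (Htrans _ _ _ (Hsym _ _ H0) H1)).
  - apply Hrefl.
  - exists K. split; assumption.
Qed.

Lemma congruence_full_of_bot_top : th bot top -> forall a b, th a b.
Proof.
  destruct Hth as [[Hrefl Htrans Hsym] [Hm _]]. intro H01.
  assert (H0 : forall c, th c bot).
  { intro c. rewrite <- (meet_top c) at 1. rewrite <- (meetx0 L c).
    apply Hm; [apply Hrefl | apply Hsym, H01]. }
  intros a b. exact (Htrans _ _ _ (H0 a) (Hsym _ _ (H0 b))).
Qed.

Lemma congruence_identity : (forall K, prime_ideal L K -> saturated L th K) ->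
  forall a b, th a b -> a = b.
Proof.
  destruct Hth as [[_ _ Hsym] _]. intros Hall.
  assert (Hle : forall u v, th u v -> le L v u).
  { intros u v Huv. apply NNPP. intro Hvu.
    destruct (exists_prime_ideal_separating L u v Hvu) as [K [HK [Ku Kv]]].
    exact (Kv (Hall K HK u v Huv Ku)). }
  intros a b Hab. apply le_antisym; apply Hle; [apply Hsym|]; exact Hab.
Qed.

End Saturation.

Lemma simple_of_zeta_union_covers (L : pmAlgebra) Q : regular L -> order_component L Q ->
  zeta_union_covers L Q -> simple L.
Proof.
  intros Hreg HQ Hcover. split.
  - destruct HQ as [[I0 QI0] [HQp _]]. intro E.
    apply (prime_top L (HQp I0 QI0)). rewrite <- E. exact (prime_bot L (HQp I0 QI0)).
  - intros th Hth. destruct (classic (th bot top)) as [H01|H01].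
    + right. exact (congruence_full_of_bot_top L th Hth H01).
    + left. destruct (exists_saturated_prime L th Hth H01) as [K [HK HsK]].
      exact (congruence_identity L th Hth (saturated_all_primes L th Hth Q K Hreg HQ Hcover HK HsK)).
Qed.

Section Simple.
Variable L : pmAlgebra.
Implicit Types a b c d e x y : L.
Implicit Types I J K : L -> Prop.

Lemma congruence_meet_fixed e : negpc L e = e -> congruence L (fun a b => meet a e = meet b e).
Proof.
  intro He.
  assert (HmI : forall a c, meet (meet a c) e = meet (meet a e) (meet c e)).
  { intros a c. apply le_antisym.
    - apply lexI; apply leI2; [apply leIl | apply le_refl | apply leIr | apply le_refl].
    - apply lexI; [apply leI2; apply leIl | eapply le_trans; apply leIr]. }
  assert (Hpc : forall a, meet (pc a) e = meet (pc (meet a e)) e).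
  { intro a. apply le_antisym; apply lexI; try apply leIr.
    - eapply le_trans; [apply leIl | apply pc_le, leIl].
    - apply pc_max. rewrite (meetC (pc _) e), meetA. apply meet_pc. }
  assert (Hneg : forall a, meet (neg a) e = meet (neg (meet a e)) e).
  { intro a. rewrite neg_meet, meet_joinDl.
    rewrite <- He at 4. unfold negpc. rewrite meet_pc. symmetry. apply join_bot. }
  split; [|split; [|split; [|split]]].
  - split; [intro a; reflexivity | intros a b c H1 H2; congruence | intros a b H; congruence].
  - intros a b c d H1 H2. rewrite !HmI, H1, H2. reflexivity.
  - intros a b c d H1 H2. rewrite !meet_joinDl, H1, H2. reflexivity.
  - intros a b H. rewrite Hpc, H, <- Hpc. reflexivity.
  - intros a b H. rewrite Hneg, H, <- Hneg. reflexivity.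
Qed.

Lemma negpc_fixed_trivial e : simple L -> negpc L e = e -> e = bot \/ e = top.
Proof.
  intros [_ HS] He. destruct (HS _ (congruence_meet_fixed e He)) as [Hid|Hall].
  - right. apply Hid. rewrite meetxx, meet1x. reflexivity.
  - left. specialize (Hall bot top). cbv beta in Hall. rewrite meet0x, meet1x in Hall.
    symmetry; exact Hall.
Qed.

Lemma exists_prime_below (g : L -> L) I J : prime_ideal L I -> ideal L J ->
  (forall a b, le L a b -> le L (g a) (g b)) -> (forall x, J x -> I (negpc L (g x))) ->
  exists K, prime_ideal L K /\ (forall a, K a -> I a) /\ (forall x, J x -> zeta L K (g x)).
Proof.
  intros HI [J_bot [_ J_join]] Hg HJ.
  set (F := fun z => exists u x, ~ I u /\ J x /\ le L (meet u (neg (g x))) z).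
  destruct (exists_prime_ideal_avoiding L F) as [K [HK HF]].
  - exists top, bot. split; [exact (prime_top L HI) | split; [exact J_bot | apply lex1]].
  - intros a b [u1 [x1 [Hu1 [Hx1 H1]]]] [u2 [x2 [Hu2 [Hx2 H2]]]].
    exists (meet u1 u2), (join x1 x2).
    split; [apply (prime_meetN L HI); assumption | split; [apply J_join; assumption|]].
    apply lexI; (eapply le_trans; [|eassumption]); apply leI2;
      [apply leIl | | apply leIr |]; apply neg_le, Hg; [apply leUl | apply leUr].
  - (* u /\ (g x)' = 0 would put u below (g x)'^*, which lies in I *)
    intros [u [x [Hu [Hx Hle]]]]. apply Hu. apply (prime_down L HI (b := negpc L (g x))).
    + apply pc_max. rewrite meetC. apply lex0, Hle.
    + exact (HJ x Hx).
  - exists K. split; [exact HK | split].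
    + intros a Ka. apply NNPP. intro Ia. apply (HF a); [|exact Ka].
      exists a, bot. split; [exact Ia | split; [exact J_bot | apply leIl]].
    + intros x Hx Kx. apply (HF (neg (g x))); [|exact Kx].
      exists top, x. split; [exact (prime_top L HI) | split; [exact Hx|]].
      rewrite meet1x. apply le_refl.
Qed.

Lemma linked_prime_above k : forall I I' J, prime_ideal L I' -> linked L I I' -> ideal L J ->
  (forall x, J x -> I' (iter_negpc L k x)) ->
  exists K, prime_ideal L K /\ linked L I K /\ (forall x, J x -> K x).
Proof.
  induction k as [|k IH]; intros I I' J HI' Hl HJ Hk.
  - exists I'. auto.
  - destruct (exists_prime_below (iter_negpc L k) I' J HI' HJ (iter_negpc_le L k) Hk)
      as [K [HK [HKI' HzK]]].
    apply (IH I (zeta L K) J (zeta_prime L HK)); [|exact HJ | exact HzK].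
    apply linked_zeta. apply (linked_comparable L I I'); [|exact Hl].
    split; [exact HI' | split; [exact HK | right; exact HKI']].
Qed.

Lemma linked_or_witness n I0 I : prime_ideal L I0 -> prime_ideal L I ->
  linked L I I0 \/
  exists x, I0 x /\ ~ I (iter_negpc L n x) /\ ~ I (iter_negpc L (S n) x).
Proof.
  intros HI0 HI.
  destruct (classic (exists x, I0 x /\ ~ I (iter_negpc L n x) /\ ~ I (iter_negpc L (S n) x)))
    as [Hx|Hx]; [right; exact Hx | left].
  assert (Hcase : forall x, I0 x -> I (iter_negpc L n x) \/ I (iter_negpc L (S n) x)).
  { intros x Ix. apply NNPP. intro Hn. apply not_or_and in Hn. apply Hx. exists x. tauto. }
  assert (Hdown : forall k, down_closed L (fun x => I (iter_negpc L k x))).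
  { intros k a b Hab Ib. exact (prime_down L HI (iter_negpc_le L k a b Hab) Ib). }
  pose proof (prime_ideal_ideal L I0 HI0) as HI0i.
  assert (Hstart : linked L I I) by (left; apply rt_refl).
  assert (HK : exists K, prime_ideal L K /\ linked L I K /\ (forall x, I0 x -> K x)).
  { destruct (join_closed_sub_or L I0 _ _ (proj2 (proj2 HI0i)) (Hdown n) (Hdown (S n)) Hcase)
      as [H|H]; [exact (linked_prime_above n I I I0 HI Hstart HI0i H)
                | exact (linked_prime_above (S n) I I I0 HI Hstart HI0i H)]. }
  destruct HK as [K [HK [Hl HI0K]]]. apply (linked_comparable L I K); [|exact Hl].
  split; [exact HK | split; [exact HI0 | right; exact HI0K]].
Qed.

Lemma fixed_point_of_witness n I0 I x : range_identity L n ->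
  prime_ideal L I0 -> prime_ideal L I ->
  I0 x -> ~ I (iter_negpc L n x) -> ~ I (iter_negpc L (S n) x) ->
  exists e, negpc L e = e /\ I0 e /\ ~ I e.
Proof.
  intros Hn HI0 HI Ix N1 N2. exists (iter_negpc L n (meet x (negpc L x))).
  split; [symmetry; apply Hn | split].
  - apply (prime_iter_negpc L); [exact HI0 | exact (prime_down L HI0 (leIl L x _) Ix)|].
    apply (prime_down L HI0 (negpc_le L _ _ (leIr L x _))), (prime_negpc2 L), Ix; exact HI0.
  - rewrite iter_negpcI, <- iter_negpcSr. apply (prime_meetN L HI); assumption.
Qed.

Lemma zeta_union_covers_of_simple n : range_identity L n -> simple L ->
  exists Q, order_component L Q /\ zeta_union_covers L Q.
Proof.
  intros Hn HS.
  destruct (exists_prime_ideal_avoiding L (fun z => z = top)) as [I0 [HI0 _]].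
  - reflexivity.
  - intros a b -> ->. apply meetxx.
  - exact (proj1 HS).
  - exists (path_connected L I0). split; [exact (order_component_path L I0 HI0)|].
    intro I. split.
    + intro HI. destruct (linked_or_witness n I0 I HI0 HI) as [Hl | [x [Ix [N1 N2]]]].
      * destruct (linked_sym L I I0 Hl) as [H|H]; [left; exact H | right].
        exists (zeta L I). split; [exact H | symmetry; apply zetaK].
      * exfalso. destruct (fixed_point_of_witness n I0 I x Hn HI0 HI Ix N1 N2)
          as [e [He [I0e Ie]]].
        destruct (negpc_fixed_trivial e HS He) as [-> | ->];
          [exact (Ie (prime_bot L HI)) | exact (prime_top L HI0 I0e)].
    + intros [H | [J [H ->]]]; [|apply zeta_prime]; exact (path_prime L I0 _ H HI0).
Qed.

End Simple.

Theorem theorem4p2 (n : nat) (L : pmAlgebra) (HL : in_Mn L n) :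
  simple L <->
  exists Q : (L -> Prop) -> Prop,
    order_component L Q /\
    (forall I : L -> Prop,
       prime_ideal L I <-> (Q I \/ exists J, Q J /\ I = zeta L J)).
Proof.
  destruct HL as [Hreg Hrange]. split.
  - exact (zeta_union_covers_of_simple L n Hrange).
  - intros [Q [HQ Hcover]]. exact (simple_of_zeta_union_covers L Q Hreg HQ Hcover).
Qed.
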